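(* Let $A$ be a commutative ring, $E$ a non-zero $A$-module and $R=A\propto E$ the trivial ring extension of $A$ by $E$. Then $R$ is arithmetical if and only if $A$ is arithmetical, $A_P$ is an integral domain for each $P\in\mathrm{Supp}(E)$, and $E$ is locally FP-injective and has a distributive lattice of submodules.
   Context: All rings are commutative with identity. The trivial ring extension $R=A\propto E$ is the ring with underlying additive group $A\times E$ and multiplication $(a,e)(a',e')=(aa',ae'+a'e)$. A module $E$ has a distributive lattice of submodules if $(M+N)\cap P=(M\cap P)+(N\cap P)$ for all submodules $M,N,P$ of $E$; a ring is arithmetical if its lattice of ideals is distributive. A module $E$ is FP-injective if $\mathrm{Ext}^1(F,E)=0$ for every finitely presented module $F$, and locally FP-injective if $E_P$ is an FP-injective $A_P$-module for each maximal ideal $P$. $\mathrm{Supp}(E)=\{P \text{ prime}: E_P\neq 0\}$. *)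

From HB Require Import structures.
From mathcomp Require Import all_boot all_order all_algebra.
Set Implicit Arguments. Unset Strict Implicit. Unset Printing Implicit Defensive.
Import Order.TTheory GRing.Theory Num.Theory.
Local Open Scope ring_scope.

Definition triv_ext (A : comNzRingType) (E : lmodType A) : Type := (A * E)%type.

HB.instance Definition _ (A : comNzRingType) (E : lmodType A) :=
  GRing.Zmodule.on (triv_ext E).

Definition te_one (A : comNzRingType) (E : lmodType A) : triv_ext E := (1, 0).
Definition te_mul (A : comNzRingType) (E : lmodType A) (x y : triv_ext E) :
  triv_ext E := (x.1 * y.1, x.1 *: y.2 + y.1 *: x.2).

Lemma te_mulA (A : comNzRingType) (E : lmodType A) : associative (@te_mul A E).
Proof.
move=> [a e] [b f] [c g]; rewrite /te_mul /=; congr (_, _); first by rewrite mulrA.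
rewrite !scalerDr !scalerA [c * a]mulrC [c * b]mulrC [b * c]mulrC.
by rewrite addrA [_ + (c * b) *: _]addrC addrA.
Qed.

Lemma te_mulC (A : comNzRingType) (E : lmodType A) : commutative (@te_mul A E).
Proof. by move=> [a e] [b f]; rewrite /te_mul /= mulrC addrC. Qed.

Lemma te_mul1 (A : comNzRingType) (E : lmodType A) :
  left_id (@te_one A E) (@te_mul A E).
Proof. by move=> [a e]; rewrite /te_mul /= mul1r scale1r scaler0 addr0. Qed.

Lemma te_mulDl (A : comNzRingType) (E : lmodType A) :
  left_distributive (@te_mul A E) +%R.
Proof.
move=> [a e] [b f] [c g]; rewrite /te_mul /=.
congr (_, _); first by rewrite mulrDl.
by rewrite scalerDl scalerDr addrACA.
Qed.

Lemma te_one_neq0 (A : comNzRingType) (E : lmodType A) :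
  @te_one A E != 0.
Proof. by apply/negP => /eqP [] /eqP; rewrite oner_eq0. Qed.

HB.instance Definition _ (A : comNzRingType) (E : lmodType A) :=
  GRing.Zmodule_isComNzRing.Build (triv_ext E)
    (@te_mulA A E) (@te_mulC A E) (@te_mul1 A E) (@te_mulDl A E) (@te_one_neq0 A E).


Definition set_sum (M : zmodType) (I J : M -> Prop) : M -> Prop :=
  fun x => exists i j, [/\ I i, J j & x = i + j].
Definition set_meet (T : Type) (I J : T -> Prop) : T -> Prop :=
  fun x => I x /\ J x.

Definition is_ideal (R : comNzRingType) (I : R -> Prop) : Prop :=
  [/\ I 0, (forall x y, I x -> I y -> I (x + y)) & (forall r x, I x -> I (r * x))].

Definition arithmetical (R : comNzRingType) : Prop :=
  forall I J K : R -> Prop, is_ideal I -> is_ideal J -> is_ideal K ->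
    forall x, set_meet (set_sum I J) K x <-> set_sum (set_meet I K) (set_meet J K) x.

Definition is_submodule (A : pzRingType) (M : lmodType A) (N : M -> Prop) : Prop :=
  [/\ N 0, (forall x y, N x -> N y -> N (x + y)) & (forall (a : A) x, N x -> N (a *: x))].

Definition distributive_submodules (A : pzRingType) (M : lmodType A) : Prop :=
  forall N1 N2 N3 : M -> Prop,
    is_submodule N1 -> is_submodule N2 -> is_submodule N3 ->
    forall x, set_meet (set_sum N1 N2) N3 x <-> set_sum (set_meet N1 N3) (set_meet N2 N3) x.

Definition is_prime_ideal (R : comNzRingType) (P : R -> Prop) : Prop :=
  [/\ is_ideal P, ~ P 1 & forall a b, P (a * b) -> P a \/ P b].

Definition is_maximal_ideal (R : comNzRingType) (P : R -> Prop) : Prop :=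
  [/\ is_ideal P, ~ P 1 &
      forall I, is_ideal I -> (forall x, P x -> I x) -> (forall x, I x -> P x) \/ I 1].

(* Integral domain (the ring is non-trivial by its type). *)
Definition is_domain (R : comNzRingType) : Prop :=
  forall x y : R, x * y = 0 -> x = 0 \/ y = 0.

(* Localization at a prime P (S = A \ P), given by its standard        *)
(* characterization (Atiyah–Macdonald): phi : A -> B is (isomorphic to)*)
(* the canonical map A -> A_P iff                                      *)
Definition is_localization_at (A B : comNzRingType) (P : A -> Prop)
    (phi : {rmorphism A -> B}) : Prop :=
  [/\ forall s, ~ P s -> exists u, phi s * u = 1,
      forall b : B, exists a s, ~ P s /\ b * phi s = phi a &
      forall a, phi a = 0 -> exists s, ~ P s /\ s * a = 0].

(* psi : E -> M exhibits the B-module M as (isomorphic to) E_P = E ⊗ A_P,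
   where phi : A -> B is a localization of A at P. *)
Definition is_module_localization (A B : comNzRingType) (P : A -> Prop)
    (phi : {rmorphism A -> B}) (E : lmodType A) (M : lmodType B) (psi : E -> M) : Prop :=
  [/\ forall x y, psi (x + y) = psi x + psi y,
      forall (a : A) (e : E), psi (a *: e) = phi a *: psi e,
      forall m : M, exists e s, ~ P s /\ phi s *: m = psi e &
      forall e, psi e = 0 -> exists s, ~ P s /\ s *: e = 0].

Definition localization_is_domain (A : comNzRingType) (P : A -> Prop) : Prop :=
  forall (B : comNzRingType) (phi : {rmorphism A -> B}),
    is_localization_at P phi -> is_domain B.

Definition in_supp (A : comNzRingType) (E : lmodType A) (P : A -> Prop) : Prop :=
  is_prime_ideal P /\
  forall (B : comNzRingType) (phi : {rmorphism A -> B}), is_localization_at P phi ->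
  forall (M : lmodType B) (psi : E -> M), @is_module_localization A B P phi E M psi ->
    exists m : M, m != 0.

Definition finitely_presented (B : comNzRingType) (F : lmodType B) : Prop :=
  exists (n m : nat) (f : {linear 'rV[B]_n -> F}) (g : {linear 'rV[B]_m -> 'rV[B]_n}),
    (forall y : F, exists v, f v = y) /\
    (forall v, f v = 0 <-> exists w, v = g w).

(* Ext^1_B(F, M) = 0, via Yoneda: every short exact sequence
   0 -> M --i--> X --p--> F -> 0 of B-modules splits. *)
Definition Ext1_vanishes (B : comNzRingType) (F M : lmodType B) : Prop :=
  forall (X : lmodType B) (i : {linear M -> X}) (p : {linear X -> F}),
    injective i -> (forall y : F, exists x, p x = y) ->
    (forall x, p x = 0 <-> exists m, x = i m) ->
    exists r : {linear X -> M}, forall m, r (i m) = m.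

Definition FP_injective (B : comNzRingType) (M : lmodType B) : Prop :=
  forall F : lmodType B, finitely_presented F -> Ext1_vanishes F M.

Definition locally_FP_injective (A : comNzRingType) (E : lmodType A) : Prop :=
  forall P : A -> Prop, is_maximal_ideal P ->
  forall (B : comNzRingType) (phi : {rmorphism A -> B}), is_localization_at P phi ->
  forall (M : lmodType B) (psi : E -> M), @is_module_localization A B P phi E M psi ->
    FP_injective M.

(* By Jensen's criterion, the lattice of submodules of a module is
   distributive iff any two elements [x, y] admit [a] with [a x] a multiple of
   [y] and [(1 - a) y] a multiple of [x]; at a prime [P] this says that [x] and
   [y] are comparable under divisibility up to an element outside [P].

   For [R = A ⋉ E], Jensen's condition on the pairs [(a, 0), (b, 0)],
   [(0, e), (0, f)] and [(a, 0), (0, e)] says that [A] and [E] are distributive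
   and that [c a = 0], [(1 - c) e ∈ a E] for some [c].  At a prime of [Supp E]
   the last property makes [A_P] a domain; at a maximal ideal it makes [E_P]
   divisible by the nonzero elements of the chain ring [A_P], and a consistent
   linear system over a chain ring with coefficients in such a module is solved
   by Gaussian elimination, pivoting on a coefficient that divides its column:
   this is FP-injectivity.

   Conversely, FP-injectivity of [E_P] splits the pushout of
   [0 -> A_P --d--> A_P -> A_P/dA_P -> 0] along [1 |-> m], so [E_P] is
   divisible by each nonzero [d] of the domain [A_P]; with the chain conditions on [A_P] and
   [E_P] this makes any two elements of [R_P] comparable, and comparability at
   every maximal ideal yields Jensen's condition for [R]. *)

From HB Require Import structures.
From mathcomp Require Import all_boot all_order all_algebra.
From mathcomp Require Import boolp ring.
From mathcomp Require classical_sets.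
Set Implicit Arguments. Unset Strict Implicit. Unset Printing Implicit Defensive.
Import GRing.Theory.
Local Open Scope ring_scope.

Section TrivExtEmbeddings.
Variables (A : comNzRingType) (V : lmodType A).

Definition te_vec (v : V) : triv_ext V := (0, v).
Definition te_scal (a : A) : triv_ext V := (a, 0).

Lemma te_vec_inj : injective te_vec. Proof. by move=> x y []. Qed.

Lemma te_vec_is_zmod : zmod_morphism te_vec.
Proof. by move=> x y; congr pair; rewrite subr0. Qed.
HB.instance Definition _ := GRing.isZmodMorphism.Build V (triv_ext V) te_vec te_vec_is_zmod.

Lemma te_scal_is_zmod : zmod_morphism te_scal.
Proof. by move=> x y; congr pair; rewrite subr0. Qed.
HB.instance Definition _ := GRing.isZmodMorphism.Build A (triv_ext V) te_scal te_scal_is_zmod.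

Lemma te_scal_is_monoid : monoid_morphism te_scal.
Proof. by split=> // x y; congr pair; rewrite /= !scaler0 addr0. Qed.
HB.instance Definition _ :=
  GRing.isMonoidMorphism.Build A (triv_ext V) te_scal te_scal_is_monoid.

Lemma te_vecZ a v : te_vec (a *: v) = te_scal a * te_vec v.
Proof. by congr pair; rewrite /= ?mulr0 // scale0r addr0. Qed.

Lemma te_vecD x y : te_vec (x + y) = te_vec x + te_vec y. Proof. exact: raddfD. Qed.
Lemma te_vecB x y : te_vec (x - y) = te_vec x - te_vec y. Proof. exact: raddfB. Qed.
Lemma te_vecN x : te_vec (- x) = - te_vec x. Proof. exact: raddfN. Qed.
Lemma te_vec0 : te_vec 0 = 0. Proof. exact: raddf0. Qed.
Lemma te_scalD x y : te_scal (x + y) = te_scal x + te_scal y. Proof. exact: raddfD. Qed.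
Lemma te_scalB x y : te_scal (x - y) = te_scal x - te_scal y. Proof. exact: raddfB. Qed.
Lemma te_scalN x : te_scal (- x) = - te_scal x. Proof. exact: raddfN. Qed.
Lemma te_scal0 : te_scal 0 = 0. Proof. exact: raddf0. Qed.
Lemma te_scalM x y : te_scal (x * y) = te_scal x * te_scal y. Proof. exact: rmorphM. Qed.
Lemma te_scal1 : te_scal 1 = 1. Proof. exact: rmorph1. Qed.
End TrivExtEmbeddings.

(* An identity between vectors of a module over a commutative ring holds as
   soon as it holds in the ring A ⋉ V, where [ring] can decide it. *)
Ltac lmod_ring :=
  apply: te_vec_inj;
  rewrite ?(te_vecZ, te_vecD, te_vecB, te_vecN, te_vec0);
  rewrite ?(te_scalD, te_scalB, te_scalN, te_scal0, te_scalM, te_scal1); ring.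


(* [pquot dom eqv retract] is the quotient of [dom] by the Prop-valued
   equivalence [eqv]; [retract] maps every element of [T] to an equivalent
   element of [dom]. *)
Section PropQuotient.
Variables (T : choiceType) (dom : T -> Prop) (eqv : T -> T -> Prop) (retract : T -> T).

Definition canon (x : T) : T := choose (fun y => `[< dom y /\ eqv x y >]) (retract x).
Definition pquot := {x : T | canon x == x}.

End PropQuotient.
HB.instance Definition _ T dom eqv retract := Choice.on (@pquot T dom eqv retract).

Section PropQuotientTheory.
Variables (T : choiceType) (dom : T -> Prop) (eqv : T -> T -> Prop) (retract : T -> T).

Record pquot_spec : Prop := PQuotSpec {
  eqv_sym : forall x y, eqv x y -> eqv y x;
  eqv_trans : forall x y z, eqv x y -> eqv y z -> eqv x z;
  retractP : forall x, dom (retract x) /\ eqv x (retract x) }.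
Hypothesis Hq : pquot_spec.

Let canonP x : dom (canon dom eqv retract x) /\ eqv x (canon dom eqv retract x).
Proof.
apply/asboolP; apply: (@chooseP _ (fun y => `[< dom y /\ eqv x y >])).
by apply/asboolP; apply: (retractP Hq).
Qed.

Let canon_equiv x y : eqv x y -> canon dom eqv retract x = canon dom eqv retract y.
Proof.
move=> Exy; rewrite /canon.
have -> : (fun z => `[< dom z /\ eqv x z >]) = (fun z => `[< dom z /\ eqv y z >]).
  apply: funext => z; apply/asboolP/asboolP => -[dz Ez]; split => //.
    exact (eqv_trans Hq (eqv_sym Hq Exy) Ez).
  exact (eqv_trans Hq Exy Ez).
apply: choose_id; apply/asboolP; last exact: (retractP Hq y).
split; first exact: (retractP Hq x).1.
exact (eqv_trans Hq (eqv_sym Hq Exy) (retractP Hq x).2).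
Qed.

Let canon_idem x : canon dom eqv retract (canon dom eqv retract x) = canon dom eqv retract x.
Proof. exact/esym/canon_equiv/(canonP x).2. Qed.

Definition ppi (x : T) : pquot dom eqv retract :=
  exist _ (canon dom eqv retract x) (introT eqP (canon_idem x)).

Lemma ppi_eq x y : ppi x = ppi y <-> eqv x y.
Proof.
split => [/(congr1 val) /= Ec | Exy]; last exact/val_inj/canon_equiv.
apply: (eqv_trans Hq) (canonP x).2 _; rewrite Ec; exact: (eqv_sym Hq) (canonP y).2.
Qed.

Lemma pquot_dom (q : pquot dom eqv retract) : dom (val q).
Proof. by case: q => x /= /eqP <-; apply: (canonP x).1. Qed.

Lemma ppi_val (q : pquot dom eqv retract) : ppi (val q) = q.
Proof. by apply: val_inj; case: q => x /= /eqP. Qed.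

Lemma eqv_ppi x : eqv x (val (ppi x)).
Proof. exact: (canonP x).2. Qed.

Lemma ppi_ind (P : pquot dom eqv retract -> Prop) :
  (forall x, dom x -> P (ppi x)) -> forall q, P q.
Proof. by move=> HP q; rewrite -(ppi_val q); apply/HP/pquot_dom. Qed.

End PropQuotientTheory.

Arguments ppi_eq {T dom eqv retract} Hq x y.
Arguments eqv_ppi {T dom eqv retract} Hq x.
Arguments ppi_ind {T dom eqv retract} Hq P.

(** * Localization *)

Record multset (A : comNzRingType) := MultSet {
  multset_pred :> A -> Prop;
  multset1 : multset_pred 1;
  multsetM : forall a b, multset_pred a -> multset_pred b -> multset_pred (a * b);
  multset_neq0 : ~ multset_pred 0 }.

Section Fractions.
Variables (A : comNzRingType) (S : multset A) (V : lmodType A).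
Local Notation S1 := (multset1 S).
Local Notation SM := (@multsetM A S).

Definition frac := (V * A)%type.
Definition frac_ok (x : frac) := S x.2.
Definition frac_normal (x : frac) : frac := if `[< S x.2 >] then x else (0, 1).
Definition frac_eq (x y : frac) := exists2 u, S u & u *: (y.2 *: x.1 - x.2 *: y.1) = 0.
Definition frac_equiv (x y : frac) := frac_eq (frac_normal x) (frac_normal y).

Lemma frac_eq_refl x : frac_eq x x.
Proof. by exists 1; [apply: S1 | rewrite subrr scaler0]. Qed.

Lemma frac_eq_sym x y : frac_eq x y -> frac_eq y x.
Proof. by move=> [u Su Hu]; exists u => //; rewrite -opprB scalerN Hu oppr0. Qed.

Lemma frac_eq_trans y x z : frac_ok y -> frac_eq x y -> frac_eq y z -> frac_eq x z.
Proof.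
case: x y z => [v s] [v' s'] [v'' s''] /= Sy [u Su H1] [u' Su' H2] /=.
exists (u * u' * s'); first by rewrite -mulrA; apply: SM => //; apply: SM.
have -> : (u * u' * s') *: (s'' *: v - s *: v'') =
   (u' * s'') *: (u *: (s' *: v - s *: v')) + (u * s) *: (u' *: (s'' *: v' - s' *: v'')).
  by lmod_ring.
by rewrite H1 H2 !scaler0 addr0.
Qed.

Lemma frac_normal_ok x : frac_ok (frac_normal x).
Proof. by rewrite /frac_normal; case: asboolP => // _; apply: S1. Qed.

Lemma frac_normal_id x : frac_ok x -> frac_normal x = x.
Proof. by rewrite /frac_normal; case: asboolP. Qed.

Lemma frac_spec : pquot_spec frac_ok frac_equiv frac_normal.
Proof.
split=> [x y | x y z | x].
- exact: frac_eq_sym.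
- exact: frac_eq_trans (frac_normal_ok y).
- by rewrite /frac_equiv (frac_normal_id (frac_normal_ok x)); split;
    [apply: frac_normal_ok | apply: frac_eq_refl].
Qed.

Definition loc := pquot frac_ok frac_equiv frac_normal.
HB.instance Definition _ := Choice.on loc.

Definition frac_pi (x : frac) : loc := ppi frac_spec x.

Lemma frac_piP x y : frac_ok x -> frac_ok y -> frac_pi x = frac_pi y <-> frac_eq x y.
Proof. by move=> Sx Sy; rewrite (ppi_eq frac_spec) /frac_equiv !frac_normal_id. Qed.

Lemma loc_ok (q : loc) : frac_ok (val q).
Proof. exact: (pquot_dom frac_spec). Qed.

Lemma frac_eq_pi x : frac_ok x -> frac_eq x (val (frac_pi x)).
Proof.
move=> Sx; have := eqv_ppi frac_spec x.
by rewrite /frac_equiv (frac_normal_id Sx) (frac_normal_id (loc_ok _)).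
Qed.

Lemma frac_pi_ind (P : loc -> Prop) : (forall x, frac_ok x -> P (frac_pi x)) -> forall q, P q.
Proof. exact: (ppi_ind frac_spec). Qed.

End Fractions.

Section FractionOperations.
Variables (A : comNzRingType) (S : multset A) (V1 V2 V3 : lmodType A).
Variable f : frac V1 -> frac V2 -> frac V3.
Hypothesis f_ok : forall x y, frac_ok S x -> frac_ok S y -> frac_ok S (f x y).
Hypothesis f_eql : forall x x' y, frac_eq S x x' -> frac_eq S (f x y) (f x' y).
Hypothesis f_eqr : forall x y y', frac_eq S y y' -> frac_eq S (f x y) (f x y').

Lemma frac_pi_op2 x y : frac_ok S x -> frac_ok S y ->
  frac_pi S (f (val (frac_pi S x)) (val (frac_pi S y))) = frac_pi S (f x y).
Proof.
move=> Sx Sy; apply/frac_piP; [by apply: f_ok; apply: loc_ok | exact: f_ok |].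
apply: (@frac_eq_trans _ _ _ (f x (val (frac_pi S y)))); first exact/f_ok/loc_ok.
  exact/f_eql/frac_eq_sym/frac_eq_pi.
exact/f_eqr/frac_eq_sym/frac_eq_pi.
Qed.

End FractionOperations.

Section LocZmodule.
Variables (A : comNzRingType) (S : multset A) (V : lmodType A).
Local Notation S1 := (multset1 S).
Local Notation SM := (@multsetM A S).

Definition frac_add (x y : frac V) : frac V := (y.2 *: x.1 + x.2 *: y.1, x.2 * y.2).
Definition frac_opp (x : frac V) : frac V := (- x.1, x.2).

Lemma frac_addC x y : frac_add x y = frac_add y x.
Proof. by rewrite /frac_add addrC mulrC. Qed.

Lemma frac_add_ok x y : frac_ok S x -> frac_ok S y -> frac_ok S (frac_add x y).
Proof. exact: SM. Qed.

Lemma frac_add_eql x x' y : frac_eq S x x' -> frac_eq S (frac_add x y) (frac_add x' y).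
Proof.
case: x x' y => [v s] [v' s'] [w t] [u Su H]; exists u => //=.
have -> : u *: (s' * t *: (t *: v + s *: w) - s * t *: (t *: v' + s' *: w)) =
   (t * t) *: (u *: (s' *: v - s *: v')) by lmod_ring.
by rewrite H scaler0.
Qed.

Lemma frac_add_eqr x y y' : frac_eq S y y' -> frac_eq S (frac_add x y) (frac_add x y').
Proof. by rewrite !(frac_addC x); apply: frac_add_eql. Qed.

Lemma frac_opp_eq x x' : frac_eq S x x' -> frac_eq S (frac_opp x) (frac_opp x').
Proof.
case: x x' => [v s] [v' s'] [u Su H]; exists u => //=.
by rewrite !scalerN opprK addrC -opprB scalerN H oppr0.
Qed.

Definition loc_add (p q : loc S V) : loc S V := frac_pi S (frac_add (val p) (val q)).
Definition loc_opp (p : loc S V) : loc S V := frac_pi S (frac_opp (val p)).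
Definition loc_zero : loc S V := frac_pi S (0, 1).

Lemma loc_addE x y : frac_ok S x -> frac_ok S y ->
  loc_add (frac_pi S x) (frac_pi S y) = frac_pi S (frac_add x y).
Proof. exact: (frac_pi_op2 (@frac_add_ok) (@frac_add_eql) (@frac_add_eqr)). Qed.

Lemma loc_oppE x : frac_ok S x -> loc_opp (frac_pi S x) = frac_pi S (frac_opp x).
Proof.
move=> Sx; apply/frac_piP; [exact: loc_ok | by [] |].
exact/frac_opp_eq/frac_eq_sym/frac_eq_pi.
Qed.

Lemma loc_addA : associative loc_add.
Proof.
elim/frac_pi_ind => x Sx; elim/frac_pi_ind => y Sy; elim/frac_pi_ind => z Sz.
rewrite (loc_addE Sy Sz) (loc_addE Sx Sy) (loc_addE Sx (frac_add_ok Sy Sz)).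
rewrite (loc_addE (frac_add_ok Sx Sy) Sz).
by case: x y z {Sx Sy Sz} => [v s] [v' s'] [v'' s'']; congr (frac_pi S (_, _));
  [lmod_ring | rewrite /= mulrA].
Qed.

Lemma loc_addC : commutative loc_add.
Proof. by elim/frac_pi_ind => x Sx; elim/frac_pi_ind => y Sy; rewrite !loc_addE // frac_addC. Qed.

Lemma loc_add0 : left_id loc_zero loc_add.
Proof.
elim/frac_pi_ind => -[v s] Ss; rewrite /loc_zero loc_addE //; last exact: S1.
by congr (frac_pi S (_, _)); rewrite /= ?mul1r // scale1r scaler0 add0r.
Qed.

Lemma loc_addN : left_inverse loc_zero loc_opp loc_add.
Proof.
elim/frac_pi_ind => -[v s] Ss; rewrite loc_oppE // loc_addE //.
apply/frac_piP; [exact: frac_add_ok | exact: S1 |].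
by exists 1; [exact: S1 | rewrite /=; lmod_ring].
Qed.

HB.instance Definition _ := GRing.isZmodule.Build (loc S V) loc_addA loc_addC loc_add0 loc_addN.

End LocZmodule.

Section LocRing.
Variables (A : comNzRingType) (S : multset A).
Local Notation S1 := (multset1 S).
Local Notation SM := (@multsetM A S).

Definition locr := loc S A^o.
HB.instance Definition _ := GRing.Zmodule.on locr.

Let scale_regular (a b : A) : a *: (b : A^o) = a * b. Proof. by []. Qed.

Definition frac_mul (x y : frac A^o) : frac A^o := (x.1 * y.1 : A, x.2 * y.2).

Lemma frac_mulC x y : frac_mul x y = frac_mul y x.
Proof. by rewrite /frac_mul mulrC [x.2 * _]mulrC. Qed.

Lemma frac_mul_ok x y : frac_ok S x -> frac_ok S y -> frac_ok S (frac_mul x y).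
Proof. exact: SM. Qed.

Lemma frac_mul_eql x x' y : frac_eq S x x' -> frac_eq S (frac_mul x y) (frac_mul x' y).
Proof.
case: x x' y => [v s] [v' s'] [w t] [u Su H]; exists u => //=.
rewrite /= !scale_regular in H *.
have -> : u * (s' * t * (v * w) - s * t * (v' * w)) = (t * w) * (u * (s' * v - s * v')).
  by ring.
by rewrite H mulr0.
Qed.

Lemma frac_mul_eqr x y y' : frac_eq S y y' -> frac_eq S (frac_mul x y) (frac_mul x y').
Proof. by rewrite !(frac_mulC x); apply: frac_mul_eql. Qed.

Definition loc_mul (p q : locr) : locr := frac_pi S (frac_mul (val p) (val q)).
Definition loc_one : locr := frac_pi S ((1 : A^o), (1 : A)).

Lemma loc_mulE x y : frac_ok S x -> frac_ok S y ->
  loc_mul (frac_pi S x) (frac_pi S y) = frac_pi S (frac_mul x y).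
Proof. exact: (frac_pi_op2 (@frac_mul_ok) (@frac_mul_eql) (@frac_mul_eqr)). Qed.

Lemma loc_mulA : associative loc_mul.
Proof.
elim/frac_pi_ind => x Sx; elim/frac_pi_ind => y Sy; elim/frac_pi_ind => z Sz.
by rewrite !loc_mulE //; try apply: frac_mul_ok => //; rewrite /frac_mul /= !mulrA.
Qed.

Lemma loc_mulC : commutative loc_mul.
Proof. by elim/frac_pi_ind => x Sx; elim/frac_pi_ind => y Sy; rewrite !loc_mulE // frac_mulC. Qed.

Lemma loc_mul1 : left_id loc_one loc_mul.
Proof.
elim/frac_pi_ind => -[v s] Ss; rewrite /loc_one loc_mulE //; last exact: S1.
by rewrite /frac_mul /= !mul1r.
Qed.

Lemma loc_mulDl : left_distributive loc_mul +%R.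
Proof.
elim/frac_pi_ind => x Sx; elim/frac_pi_ind => y Sy; elim/frac_pi_ind => z Sz.
rewrite /GRing.add /= (loc_addE Sx Sy) (loc_mulE (frac_add_ok Sx Sy) Sz).
rewrite (loc_mulE Sx Sz) (loc_mulE Sy Sz) (loc_addE (frac_mul_ok Sx Sz) (frac_mul_ok Sy Sz)).
apply/(frac_piP (frac_mul_ok (frac_add_ok Sx Sy) Sz)
                (frac_add_ok (frac_mul_ok Sx Sz) (frac_mul_ok Sy Sz))).
exists 1; first exact: S1.
by case: x y z {Sx Sy Sz} => [v s] [v' s'] [v'' s'']; rewrite /= !scale_regular; ring.
Qed.

Lemma loc_one_neq0 : loc_one != 0.
Proof.
apply/eqP => /(@frac_piP _ S A^o (1 : A^o, 1) (0, 1) S1 S1) [u Su].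
rewrite /= !scale_regular mulr1 mulr0 subr0 mulr1 => u0.
by move: Su; rewrite u0; apply: multset_neq0.
Qed.

HB.instance Definition _ :=
  GRing.Zmodule_isComNzRing.Build locr loc_mulA loc_mulC loc_mul1 loc_mulDl loc_one_neq0.

End LocRing.

Section LocModule.
Variables (A : comNzRingType) (S : multset A) (V : lmodType A).
Local Notation S1 := (multset1 S).
Local Notation SM := (@multsetM A S).

Definition frac_scale (b : frac A^o) (x : frac V) : frac V := ((b.1 : A) *: x.1, b.2 * x.2).

Lemma frac_scale_ok b x : frac_ok S b -> frac_ok S x -> frac_ok S (frac_scale b x).
Proof. exact: SM. Qed.

Lemma frac_scale_eql b b' x : frac_eq S b b' -> frac_eq S (frac_scale b x) (frac_scale b' x).
Proof.
case: b b' x => [a t] [a' t'] [v s] [u Su H]; exists u => //=.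
rewrite /= /GRing.scale /= in H.
have -> : u *: (t' * s *: (a *: v) - t * s *: (a' *: v)) =
  s *: ((u * (t' * a - t * a')) *: v) by lmod_ring.
by rewrite H scale0r scaler0.
Qed.

Lemma frac_scale_eqr b x x' : frac_eq S x x' -> frac_eq S (frac_scale b x) (frac_scale b x').
Proof.
case: b x x' => [a t] [v s] [v' s'] [u Su H]; exists u => //=.
have -> : u *: (t * s' *: (a *: v) - t * s *: (a *: v')) =
  (t * a) *: (u *: (s' *: v - s *: v')) by lmod_ring.
by rewrite H scaler0.
Qed.

Definition loc_scale (q : locr S) (m : loc S V) : loc S V :=
  frac_pi S (frac_scale (val q) (val m)).

Lemma loc_scaleE b x : frac_ok S b -> frac_ok S x ->
  loc_scale (frac_pi S b) (frac_pi S x) = frac_pi S (frac_scale b x).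
Proof. exact: (frac_pi_op2 (@frac_scale_ok) (@frac_scale_eql) (@frac_scale_eqr)). Qed.

Lemma loc_scaleA a b m : loc_scale a (loc_scale b m) = loc_scale (a * b) m.
Proof.
elim/frac_pi_ind: a => a Sa; elim/frac_pi_ind: b => b Sb; elim/frac_pi_ind: m => x Sx.
rewrite /GRing.mul /= (loc_mulE Sa Sb) !loc_scaleE //; do ?[apply: frac_scale_ok => //].
  by rewrite /frac_scale /frac_mul /= scalerA mulrA.
exact: frac_mul_ok.
Qed.

Lemma loc_scale1 : left_id 1 loc_scale.
Proof.
elim/frac_pi_ind => -[v s] Ss; rewrite /GRing.one /= /loc_one loc_scaleE //; last exact: S1.
by rewrite /frac_scale /= scale1r mul1r.
Qed.

Lemma loc_scaleDr : right_distributive loc_scale +%R.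
Proof.
elim/frac_pi_ind => b Sb; elim/frac_pi_ind => x Sx; elim/frac_pi_ind => y Sy.
rewrite /GRing.add /= (loc_addE Sx Sy) (loc_scaleE Sb (frac_add_ok Sx Sy)).
rewrite (loc_scaleE Sb Sx) (loc_scaleE Sb Sy).
rewrite (loc_addE (frac_scale_ok Sb Sx) (frac_scale_ok Sb Sy)).
apply/(frac_piP (frac_scale_ok Sb (frac_add_ok Sx Sy))
                (frac_add_ok (frac_scale_ok Sb Sx) (frac_scale_ok Sb Sy))).
exists 1; first exact: S1.
by case: b x y {Sb Sx Sy} => [a t] [v s] [v' s'] /=; lmod_ring.
Qed.

Lemma loc_scaleDl m : {morph loc_scale^~ m : a b / a + b}.
Proof.
elim/frac_pi_ind: m => x Sx; elim/frac_pi_ind => a Sa; elim/frac_pi_ind => b Sb.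
rewrite /GRing.add /= (loc_addE Sa Sb) (loc_scaleE (frac_add_ok Sa Sb) Sx).
rewrite (loc_scaleE Sa Sx) (loc_scaleE Sb Sx).
rewrite (loc_addE (frac_scale_ok Sa Sx) (frac_scale_ok Sb Sx)).
apply/(frac_piP (frac_scale_ok (frac_add_ok Sa Sb) Sx)
                (frac_add_ok (frac_scale_ok Sa Sx) (frac_scale_ok Sb Sx))).
exists 1; first exact: S1.
by case: a b x {Sa Sb Sx} => [a t] [a' t'] [v s]; rewrite /= /GRing.scale /=; lmod_ring.
Qed.

HB.instance Definition _ :=
  GRing.Zmodule_isLmodule.Build (locr S) (loc S V) loc_scaleA loc_scale1 loc_scaleDr loc_scaleDl.

End LocModule.

Section LocMaps.
Variables (A : comNzRingType) (S : multset A) (V : lmodType A).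
Local Notation S1 := (multset1 S).
Local Notation SM := (@multsetM A S).
Let scale_regular (a b : A) : a *: (b : A^o) = a * b. Proof. by []. Qed.

Definition loc_map (a : A) : locr S := frac_pi S ((a : A^o), (1 : A)).
Definition locm_map (v : V) : loc S V := frac_pi S (v, (1 : A)).

Lemma loc_map_is_zmod : zmod_morphism loc_map.
Proof.
move=> a b; rewrite /loc_map /GRing.add /GRing.opp /=.
rewrite (@loc_oppE _ _ _ ((b : A^o), (1 : A)) S1).
rewrite (loc_addE (x := ((a : A^o), (1 : A))) (y := ((- b : A^o), (1 : A))) S1 S1).
by rewrite /frac_add /frac_opp /= !scale_regular !mul1r ?mulr1.
Qed.
HB.instance Definition _ := GRing.isZmodMorphism.Build A (locr S) loc_map loc_map_is_zmod.

Lemma loc_map_is_monoid : monoid_morphism loc_map.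
Proof.
split=> // a b; rewrite /loc_map /GRing.mul /=.
by rewrite (loc_mulE (x := ((a : A^o), (1 : A))) (y := ((b : A^o), (1 : A))) S1 S1) /frac_mul /= mulr1.
Qed.
HB.instance Definition _ := GRing.isMonoidMorphism.Build A (locr S) loc_map loc_map_is_monoid.

Lemma loc_map_unit s : S s -> exists u, loc_map s * u = 1.
Proof.
move=> Ss; exists (frac_pi S ((1 : A^o), s)).
rewrite /loc_map /GRing.mul /= (loc_mulE (x := ((s : A^o), (1 : A))) (y := ((1 : A^o), s)) S1 Ss).
apply/frac_piP; [exact: SM S1 Ss | exact: S1 | exists 1; first exact: S1].
by rewrite /= !scale_regular; ring.
Qed.

Lemma loc_map_frac (b : locr S) : exists a s, S s /\ b * loc_map s = loc_map a.
Proof.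
elim/frac_pi_ind: b => -[a s] /= Ss; exists a, s; split => //.
rewrite /loc_map /GRing.mul /= (loc_mulE (x := ((a : A^o), s)) (y := ((s : A^o), (1 : A))) Ss S1).
apply/frac_piP; [exact: SM Ss S1 | exact: S1 | exists 1; first exact: S1].
by rewrite /= !scale_regular; ring.
Qed.

Lemma loc_map_eq0 a : loc_map a = 0 -> exists s, S s /\ s * a = 0.
Proof.
move=> /(@frac_piP _ S A^o ((a : A^o), (1 : A)) (0, 1) S1 S1) [u Su Hu].
by exists u; split=> //; rewrite -[RHS]Hu /= !scale_regular; ring.
Qed.

Lemma locm_mapD x y : locm_map (x + y) = locm_map x + locm_map y.
Proof.
rewrite /locm_map /GRing.add /= (loc_addE (x := (x, (1 : A))) (y := (y, (1 : A))) S1 S1).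
by rewrite /frac_add /= !scale1r mulr1.
Qed.

Lemma locm_mapZ a v : locm_map (a *: v) = loc_map a *: locm_map v.
Proof.
rewrite /locm_map /loc_map /GRing.scale /=.
by rewrite (loc_scaleE (b := ((a : A^o), (1 : A))) (x := (v, (1 : A))) S1 S1) /frac_scale /= mulr1.
Qed.

Lemma locm_map_frac (m : loc S V) : exists v s, S s /\ loc_map s *: m = locm_map v.
Proof.
elim/frac_pi_ind: m => -[v s] /= Ss; exists v, s; split => //.
rewrite /locm_map /loc_map /GRing.scale /=.
rewrite (loc_scaleE (b := ((s : A^o), (1 : A))) (x := (v, s)) S1 Ss).
apply/frac_piP; [exact: SM S1 Ss | exact: S1 | exists 1; first exact: S1].
by rewrite /=; lmod_ring.
Qed.

Lemma locm_map_eq0 v : locm_map v = 0 -> exists s, S s /\ s *: v = 0.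
Proof.
move=> /(@frac_piP _ S V (v, (1 : A)) (0, 1) S1 S1) [u Su Hu].
by exists u; split=> //; rewrite -[RHS]Hu /=; lmod_ring.
Qed.

End LocMaps.

Section PrimeComplement.
Variables (A : comNzRingType) (P : A -> Prop) (HP : is_prime_ideal P).

Lemma prime_compl1 : ~ P 1. Proof. by case: HP. Qed.

Lemma prime_complM a b : ~ P a -> ~ P b -> ~ P (a * b).
Proof. by case: HP => _ _ HM Pa Pb /HM []. Qed.

Lemma prime_compl_1B c : P c -> ~ P (1 - c).
Proof.
by case: HP => [[_ PD _] P1 _] Pc P1c; apply: P1; rewrite -(subrK c 1); apply: PD.
Qed.

Lemma prime_compl0 : ~ ~ P 0. Proof. by case: HP => -[] P0 _ _ _ _; apply. Qed.

Definition prime_compl : multset A := MultSet prime_compl1 prime_complM prime_compl0.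

Lemma localization_exists : is_localization_at P (loc_map prime_compl).
Proof.
split=> [s Ps | b | a /loc_map_eq0 //]; first exact: loc_map_unit.
by have [a [s [Ss E]]] := loc_map_frac b; exists a, s.
Qed.

Lemma module_localization_exists (E : lmodType A) :
  is_module_localization P (loc_map prime_compl) (@locm_map A prime_compl E).
Proof.
split=> [|||e /locm_map_eq0 //]; [exact: locm_mapD | exact: locm_mapZ |].
by move=> m; have [e [s [Ss H]]] := locm_map_frac m; exists e, s.
Qed.

End PrimeComplement.

(** * Quotient modules *)

Definition mk_linear (B : pzRingType) (U V : lmodType B) (h : U -> V) (H : linear h) := h.
HB.instance Definition _ (B : pzRingType) (U V : lmodType B) (h : U -> V) (H : linear h) :=
  GRing.isLinear.Build B U V *:%R (mk_linear H) H.

Record submod (K : pzRingType) (V : lmodType K) := Submod {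
  submod_pred :> V -> Prop;
  submodP : is_submodule submod_pred }.

Section QuotientModule.
Variables (K : pzRingType) (V : lmodType K) (N : submod V).

Lemma submod0 : N 0. Proof. by case: (submodP N). Qed.
Lemma submodD x y : N x -> N y -> N (x + y). Proof. by case: (submodP N) => _ + _; apply. Qed.
Lemma submodZ a x : N x -> N (a *: x). Proof. by case: (submodP N) => _ _; apply. Qed.
Lemma submodN x : N x -> N (- x). Proof. by rewrite -scaleN1r; apply: submodZ. Qed.

Definition quot_equiv (x y : V) := N (x - y).

Lemma quot_spec : pquot_spec (fun _ => True) quot_equiv id.
Proof.
split=> [x y Nxy | x y z Nxy Nyz | x]; rewrite /quot_equiv.
- by rewrite -opprB; apply: submodN.
- by rewrite -[x](subrK y) -addrA; apply: submodD.
- by rewrite subrr; split=> //; apply: submod0.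
Qed.

Definition quotm := pquot (fun _ => True) quot_equiv id.
HB.instance Definition _ := Choice.on quotm.

Definition qpi (x : V) : quotm := ppi quot_spec x.

Lemma qpiP x y : qpi x = qpi y <-> N (x - y).
Proof. exact: (ppi_eq quot_spec). Qed.

Lemma qpi_ind (P : quotm -> Prop) : (forall x, P (qpi x)) -> forall q, P q.
Proof. by move=> HP; apply: (ppi_ind quot_spec) => x _; apply: HP. Qed.

Lemma qpi_val x : N (x - val (qpi x)).
Proof. exact: (eqv_ppi quot_spec). Qed.

Definition quot_add (p q : quotm) : quotm := qpi (val p + val q).
Definition quot_opp (p : quotm) : quotm := qpi (- val p).
Definition quot_scale (a : K) (q : quotm) : quotm := qpi (a *: val q).

Lemma quot_addE x y : quot_add (qpi x) (qpi y) = qpi (x + y).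
Proof.
apply/qpiP; have -> : val (qpi x) + val (qpi y) - (x + y) =
  - ((x - val (qpi x)) + (y - val (qpi y))) by rewrite !opprD !opprK addrACA ![- _ + _]addrC.
by apply/submodN/submodD; apply: qpi_val.
Qed.

Lemma quot_oppE x : quot_opp (qpi x) = qpi (- x).
Proof. by apply/qpiP; rewrite opprK addrC; apply: qpi_val. Qed.

Lemma quot_scaleE a x : quot_scale a (qpi x) = qpi (a *: x).
Proof. by apply/qpiP; rewrite -scalerBr -opprB scalerN; apply/submodN/submodZ/qpi_val. Qed.

Lemma quot_addA : associative quot_add.
Proof. by elim/qpi_ind => x; elim/qpi_ind => y; elim/qpi_ind => z; rewrite !quot_addE addrA. Qed.

Lemma quot_addC : commutative quot_add.
Proof. by elim/qpi_ind => x; elim/qpi_ind => y; rewrite !quot_addE addrC. Qed.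

Lemma quot_add0 : left_id (qpi 0) quot_add.
Proof. by elim/qpi_ind => x; rewrite quot_addE add0r. Qed.

Lemma quot_addN : left_inverse (qpi 0) quot_opp quot_add.
Proof. by elim/qpi_ind => x; rewrite quot_oppE quot_addE addNr. Qed.

HB.instance Definition _ := GRing.isZmodule.Build quotm quot_addA quot_addC quot_add0 quot_addN.

Lemma quot_scaleA a b q : quot_scale a (quot_scale b q) = quot_scale (a * b) q.
Proof. by elim/qpi_ind: q => x; rewrite !quot_scaleE scalerA. Qed.

Lemma quot_scale1 : left_id 1 quot_scale.
Proof. by elim/qpi_ind => x; rewrite quot_scaleE scale1r. Qed.

Lemma quot_scaleDr : right_distributive quot_scale +%R.
Proof.
move=> a; elim/qpi_ind => x; elim/qpi_ind => y.
by rewrite /GRing.add /= quot_addE !quot_scaleE (quot_addE (a *: x)) scalerDr.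
Qed.

Lemma quot_scaleDl q : {morph quot_scale^~ q : a b / a + b}.
Proof. by elim/qpi_ind: q => x a b; rewrite /GRing.add /= !quot_scaleE quot_addE scalerDl. Qed.

HB.instance Definition _ :=
  GRing.Zmodule_isLmodule.Build K quotm quot_scaleA quot_scale1 quot_scaleDr quot_scaleDl.

Lemma qpi_is_linear : linear qpi.
Proof. by move=> a x y; rewrite /GRing.add /= -quot_addE /GRing.scale /= -quot_scaleE. Qed.
HB.instance Definition _ := GRing.isLinear.Build K V quotm *:%R qpi qpi_is_linear.

Lemma qpi_eq0 x : qpi x = 0 <-> N x.
Proof. by rewrite -[0]/(qpi 0) qpiP subr0. Qed.

End QuotientModule.

(** * FP-injectivity *)

(* The extension 0 -> M -> X -> B/dB -> 0 obtained by pushing out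
   0 -> B --d--> B -> B/dB -> 0 along 1 |-> m0; it splits iff m0 is
   divisible by d. *)
Section FPInjectiveDivisible.
Variables (B : comNzRingType) (M : lmodType B) (d : B) (m0 : M).
Hypothesis d_reg : forall b, d * b = 0 -> b = 0.

Definition dmul_pred (v : 'rV[B]_1) := exists w, v = d *: w.

Lemma dmul_submod : is_submodule dmul_pred.
Proof.
split=> [|_ _ [w ->] [w' ->] | a _ [w ->]]; first by exists 0; rewrite scaler0.
  by exists (w + w'); rewrite scalerDr.
by exists (a *: w); rewrite !scalerA mulrC.
Qed.

Definition pushout_pred (z : M * 'rV[B]_1) :=
  exists w : 'rV[B]_1, z.1 = w 0 0 *: m0 /\ z.2 = - (d *: w).

Lemma pushout_submod : is_submodule pushout_pred.
Proof.
split=> [|[x1 x2] [y1 y2] [w /= [-> ->]] [w' /= [-> ->]] | a [x1 x2] [w /= [-> ->]]].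
- by exists 0; rewrite mxE scale0r scaler0 oppr0.
- by exists (w + w'); rewrite /= mxE scalerDl scalerDr opprD.
- by exists (a *: w); rewrite /= mxE; split; lmod_ring.
Qed.

Local Notation cokerd := (quotm (Submod dmul_submod)).
Local Notation pushout := (quotm (Submod pushout_submod)).

Definition pushout_incl (m : M) : pushout := qpi _ (m, 0).
Definition pushout_proj (q : pushout) : cokerd := qpi _ (val q).2.

Lemma pushout_incl_is_linear : linear pushout_incl.
Proof.
move=> a x y; rewrite /pushout_incl -linearP; congr qpi.
have -> : a *: (x, 0 : 'rV[B]_1) + (y, 0) = (a *: x + y, a *: 0 + 0) by [].
by rewrite scaler0 addr0.
Qed.

Lemma pushout_projE z : pushout_proj (qpi _ z) = qpi _ z.2.
Proof.
apply/qpiP; have [w [_ Ez]] := qpi_val (Submod pushout_submod) z.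
by exists w; rewrite -[d *: w]opprK -Ez opprB.
Qed.

Lemma pushout_proj_is_linear : linear pushout_proj.
Proof.
move=> a; elim/qpi_ind => z; elim/qpi_ind => z'.
by rewrite -linearP !pushout_projE linearP.
Qed.

Lemma pushout_incl_inj : injective pushout_incl.
Proof.
move=> m m' /qpiP [w [/= Em Ew]]; apply/eqP; rewrite -subr_eq0 Em.
have /(congr1 (fun v : 'rV[B]_1 => v 0 0)) : d *: w = 0.
  by rewrite -[d *: w]opprK -Ew /= subrr oppr0.
by rewrite !mxE => /d_reg ->; rewrite scale0r.
Qed.

Lemma pushout_proj_surj y : exists x, pushout_proj x = y.
Proof. by elim/qpi_ind: y => v; exists (qpi _ (0, v)); rewrite pushout_projE. Qed.

Lemma pushout_exact x : pushout_proj x = 0 <-> exists m, x = pushout_incl m.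
Proof.
elim/qpi_ind: x => z; rewrite pushout_projE qpi_eq0; split.
  move=> [w Ew]; exists (z.1 + w 0 0 *: m0); apply/qpiP; exists (- w).
  rewrite /= Ew mxE; split; last by rewrite subr0 scalerN opprK.
  by rewrite scaleNr opprD addrA subrr add0r.
by move=> [m /qpiP [w [_ /= Ew]]]; exists (- w); rewrite subr0 in Ew; rewrite Ew scalerN.
Qed.

Lemma cokerd_fp : finitely_presented cokerd.
Proof.
have dmul_lin : linear (fun w : 'rV[B]_1 => d *: w).
  by move=> a x y; rewrite scalerDr !scalerA mulrC.
exists 1%N, 1%N, (qpi _ : {linear 'rV_1 -> cokerd}), (mk_linear dmul_lin); split.
- by elim/qpi_ind => v; exists v.
- by move=> v; rewrite qpi_eq0.
Qed.

Lemma fp_injective_div : FP_injective M -> exists y, d *: y = m0.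
Proof.
move=> HF; have [r Hr] := HF _ cokerd_fp _ (mk_linear pushout_incl_is_linear)
  (mk_linear pushout_proj_is_linear) pushout_incl_inj pushout_proj_surj pushout_exact.
pose e := const_mx 1 : 'rV[B]_1.
exists (r (qpi _ (0, e))); rewrite -linearZ /= -[RHS](Hr m0) /mk_linear; congr (r _).
rewrite -linearZ /= /pushout_incl; apply/qpiP; exists (- e).
by rewrite /= !mxE scaler0 sub0r subr0 scaleN1r scalerN opprK.
Qed.

End FPInjectiveDivisible.

Definition chain_ring (B : comNzRingType) := forall a b : B, exists q, a = q * b \/ b = q * a.

Definition divisible (B : comNzRingType) (M : lmodType B) :=
  forall d : B, d != 0 -> forall m : M, exists y, d *: y = m.

Lemma sum_delta_scaler (B : pzRingType) (M : lmodType B) (k l0 : nat) (F : nat -> M) :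
  (l0 < k)%N -> \sum_(l < k) ((l : nat) == l0)%:R *: F l = F l0.
Proof.
move=> lt_l0k; rewrite (bigD1 (Ordinal lt_l0k)) //= eqxx scale1r big1 ?addr0 // => i.
by rewrite -val_eqE /= => /negbTE ->; rewrite scale0r.
Qed.

(* [G] and [rhs] encode the system [sum_(j < n) G l j *: y j = rhs l], [l < k]. *)
Definition consistent (B : comNzRingType) (M : lmodType B) n k
    (G : nat -> nat -> B) (rhs : nat -> M) :=
  forall c : nat -> B, (forall j, (j < n)%N -> \sum_(l < k) c l * G l j = 0) ->
    \sum_(l < k) c l *: rhs l = 0.

Section ChainRingSystems.
Variables (B : comNzRingType) (M : lmodType B).
Hypothesis chainB : chain_ring B.
Hypothesis divM : divisible M.

Lemma chain_pivot k (col : nat -> B) : (exists l, (l < k)%N /\ col l != 0) ->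
  exists l0, [/\ (l0 < k)%N, col l0 != 0 & forall l, (l < k)%N -> exists q, col l = q * col l0].
Proof.
elim: k => [[l []] //|k IHk nz_col].
have [/IHk [l0 [lt_l0k nz_l0 Hq]] | no_nz] := pselect (exists l, (l < k)%N /\ col l != 0).
  have [q [Ek | El0]] := chainB (col k) (col l0).
    exists l0; split=> [|//|l]; first exact: ltnW.
    by rewrite ltnS leq_eqVlt => /orP [/eqP -> | /Hq //]; exists q.
  have nz_k : col k != 0 by apply: contraNneq nz_l0 => Ek; rewrite El0 Ek mulr0.
  exists k; split=> // l; rewrite ltnS leq_eqVlt => /orP [/eqP -> | /Hq [q' ->]].
    by exists 1; rewrite mul1r.
  by exists (q' * q); rewrite El0 mulrA.
have col0 l : (l < k)%N -> col l = 0.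
  by move=> lt_lk; apply: contrapT => /eqP nz_l; apply: no_nz; exists l.
have nz_k : col k != 0.
  by case: nz_col => l [+ nz_l]; rewrite ltnS leq_eqVlt => /orP [/eqP <- | /col0 l0];
    rewrite ?l0 ?eqxx in nz_l.
exists k; split=> // l; rewrite ltnS leq_eqVlt => /orP [/eqP -> | /col0 ->].
  by exists 1; rewrite mul1r.
by exists 0; rewrite mul0r.
Qed.

Lemma consistent_zero_col n k G (rhs : nat -> M) :
  (forall l, (l < k)%N -> G l n = 0) -> consistent n.+1 k G rhs -> consistent n k G rhs.
Proof.
move=> G0 Hc c Hcj; apply: Hc => j; rewrite ltnS leq_eqVlt => /orP [/eqP -> | /Hcj //].
by rewrite big1 // => l _; rewrite G0 // mulr0.
Qed.

Lemma consistent_elim n k G (rhs : nat -> M) l0 (q : nat -> B) : (l0 < k)%N ->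
  (forall l, (l < k)%N -> G l n = q l * G l0 n) -> consistent n.+1 k G rhs ->
  consistent n k (fun l j => G l j - q l * G l0 j) (fun l => rhs l - q l *: rhs l0).
Proof.
move=> lt_l0k Hq Hc c Hcj.
pose s := \sum_(i < k) c i * q i.
pose c' l := c l - (l == l0)%:R * s.
have cG j : \sum_(l < k) c' l * G l j = \sum_(l < k) c l * (G l j - q l * G l0 j).
  under eq_bigr do rewrite mulrBl -mulrA.
  rewrite sumrB (@sum_delta_scaler _ B^o _ _ (fun l => s * G l j) lt_l0k).
  under [RHS]eq_bigr do rewrite mulrBr.
  by rewrite sumrB /s mulr_suml; congr (_ - _); apply: eq_bigr => i _; ring.
have crhs : \sum_(l < k) c' l *: rhs l = \sum_(l < k) c l *: (rhs l - q l *: rhs l0).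
  under eq_bigr do rewrite scalerBl -scalerA.
  rewrite sumrB (sum_delta_scaler (fun l => s *: rhs l) lt_l0k).
  under [RHS]eq_bigr do rewrite scalerBr.
  by rewrite sumrB /s scaler_suml; congr (_ - _); apply: eq_bigr => i _; rewrite scalerA.
rewrite -crhs; apply: Hc => j; rewrite ltnS leq_eqVlt => /orP [/eqP -> | /Hcj]; rewrite cG //.
by rewrite big1 // => i _; rewrite (Hq i (ltn_ord i)) subrr mulr0.
Qed.

Lemma solve_consistent n k G (rhs : nat -> M) : consistent n k G rhs ->
  exists y : nat -> M, forall l, (l < k)%N -> \sum_(j < n) G l j *: y j = rhs l.
Proof.
elim: n k G rhs => [|n IHn] k G rhs Hc.
  exists (fun _ => 0) => l lt_lk; rewrite big_ord0 -(sum_delta_scaler rhs lt_lk).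
  by apply/esym/(Hc (fun i => (i == l)%:R)) => j; rewrite ltn0.
have [nz_col | no_nz] := pselect (exists l, (l < k)%N /\ G l n != 0); last first.
  have G0 l : (l < k)%N -> G l n = 0.
    by move=> lt_lk; apply: contrapT => /eqP nz_l; apply: no_nz; exists l.
  have [y Hy] := IHn _ _ _ (consistent_zero_col G0 Hc).
  by exists y => l lt_lk; rewrite big_ord_recr /= G0 // scale0r addr0 Hy.
have [l0 [lt_l0k nz_d Hq]] := chain_pivot nz_col.
have [q Eq] : exists q : nat -> B, forall l, (l < k)%N -> G l n = q l * G l0 n.
  have /choice [q Eq] l : exists q, (l < k)%N -> G l n = q * G l0 n.
    by case: (ltnP l k) => [/Hq [q Eq] | _]; [exists q | exists 0].
  by exists q.
have [y Hy] := IHn _ _ _ (consistent_elim lt_l0k Eq Hc).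
have [yn Hyn] := divM nz_d (rhs l0 - \sum_(j < n) G l0 j *: y j).
exists (fun j => if j == n then yn else y j) => l lt_lk.
rewrite big_ord_recr /= eqxx.
under eq_bigr => j _ do rewrite /= ltn_eqF //.
have -> : \sum_(j < n) G l j *: y j =
    rhs l - q l *: rhs l0 + q l *: \sum_(j < n) G l0 j *: y j.
  rewrite -Hy // scaler_sumr -big_split /=; apply: eq_bigr => j _.
  by rewrite scalerBl scalerA subrK.
by rewrite Eq // -scalerA Hyn scalerBr; lmod_ring.
Qed.

End ChainRingSystems.

Section SplitOfLift.
Variables (B : comNzRingType) (M X F : lmodType B) (n m : nat).
Variables (i : {linear M -> X}) (p : {linear X -> F}).
Variables (f : {linear 'rV[B]_n -> F}) (g : {linear 'rV[B]_m -> 'rV[B]_n}).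
Variable s0 : {linear 'rV[B]_n -> X}.
Hypothesis i_inj : injective i.
Hypothesis p_exact : forall x, p x = 0 <-> exists y, x = i y.
Hypothesis f_surj : forall y : F, exists v, f v = y.
Hypothesis f_exact : forall v, f v = 0 <-> exists w, v = g w.
Hypothesis s0_lift : forall v, p (s0 v) = f v.
Hypothesis s0_rel : forall w, s0 (g w) = 0.

Lemma split_of_lift : exists r : {linear X -> M}, forall y, r (i y) = y.
Proof.
have /choice [pre Hpre] x : exists v, f v = p x by apply: f_surj.
have /choice [r Hr] x : exists y, i y = x - s0 (pre x).
  have /p_exact [y ->] : p (x - s0 (pre x)) = 0 by rewrite linearB /= s0_lift Hpre subrr.
  by exists y.
have r_eq x v y : f v = p x -> i y = x - s0 v -> r x = y.
  move=> Hv Hy; apply: i_inj; rewrite Hr Hy; congr (_ - _).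
  have /f_exact [w Ew] : f (pre x - v) = 0 by rewrite linearB /= Hv Hpre subrr.
  by apply/eqP; rewrite -subr_eq0 -linearB /= Ew s0_rel.
have r_lin : linear r.
  move=> a x1 x2; apply: (r_eq _ (a *: pre x1 + pre x2)).
    by rewrite [LHS]linearP [RHS]linearP /= !Hpre.
  by rewrite linearP /= !Hr linearP /=; lmod_ring.
exists (mk_linear r_lin) => y; apply: (r_eq _ 0); last by rewrite linear0 subr0.
by rewrite linear0; apply/esym/p_exact; exists y.
Qed.

End SplitOfLift.

Definition ord_ext (T : Type) (x0 : T) n (h : 'I_n -> T) (j : nat) : T :=
  if insub j is Some j' then h j' else x0.

Lemma ord_extE (T : Type) (x0 : T) n (h : 'I_n -> T) (j : 'I_n) : ord_ext x0 h j = h j.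
Proof. by rewrite /ord_ext valK. Qed.

Section FPInjectiveOfChain.
Variables (B : comNzRingType) (M : lmodType B).
Hypothesis chainB : chain_ring B.
Hypothesis divM : divisible M.

(* Lift the generators of [F] to [X]; each relation of [F] then yields an
   element of [M], and a solution of the resulting (consistent) system
   corrects the lifts so that they satisfy the relations. *)
Lemma fp_injective_of_chain : FP_injective M.
Proof.
move=> F [n [m [f [g [f_surj f_exact]]]]] X i p i_inj p_surj p_exact.
have pi0 y : p (i y) = 0 by apply/p_exact; exists y.
have /choice [x Hx] (j : 'I_n) : exists x, p x = f (delta_mx 0 j) by apply: p_surj.
pose G l j := ord_ext 0 (fun l' : 'I_m => ord_ext 0 (fun j' : 'I_n => g (delta_mx 0 l') 0 j') j) l.
have GE (l : 'I_m) (j : 'I_n) : G l j = g (delta_mx 0 l) 0 j by rewrite /G !ord_extE.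
pose xn := ord_ext 0 x.
have /choice [rhs Hrhs] (l : 'I_m) : exists y, i y = \sum_(j < n) G l j *: xn j.
  suff /p_exact [y ->] : p (\sum_(j < n) G l j *: xn j) = 0 by exists y.
  have -> : p (\sum_(j < n) G l j *: xn j) =
      f (\sum_(j < n) g (delta_mx 0 l) 0 j *: delta_mx 0 j).
    by rewrite !linear_sum; apply: eq_bigr => j _; rewrite !linearZ /= GE /xn ord_extE Hx.
  by rewrite -row_sum_delta; apply/f_exact; exists (delta_mx 0 l).
have [y Hy] : exists y : nat -> M,
    forall l, (l < m)%N -> \sum_(j < n) G l j *: y j = ord_ext 0 rhs l.
  apply: (solve_consistent chainB divM) => c Hc; apply: i_inj; rewrite linear0 linear_sum /=.
  under eq_bigr => l _ do rewrite linearZ /= ord_extE Hrhs scaler_sumr.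
  rewrite exchange_big /= big1 // => j _.
  by under eq_bigr do rewrite scalerA; rewrite -scaler_suml Hc // scale0r.
pose s0 (v : 'rV[B]_n) := \sum_(j < n) v 0 j *: (xn j - i (y j)).
have s0_lin : linear s0.
  move=> a v w; rewrite /s0 scaler_sumr -big_split /=; apply: eq_bigr => j _.
  by rewrite !mxE scalerDl scalerA.
apply: (@split_of_lift _ _ _ _ _ _ _ _ f g (mk_linear s0_lin)) => // [v | w].
  rewrite /mk_linear /s0 linear_sum [in RHS](row_sum_delta v) linear_sum /=.
  by apply: eq_bigr => j _; rewrite !linearZ /= linearB /= pi0 subr0 /xn ord_extE Hx.
have s0_gen (l : 'I_m) : s0 (g (delta_mx 0 l)) = 0.
  rewrite /s0; under eq_bigr => j _ do rewrite scalerBr -GE.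
  rewrite sumrB -Hrhs -(ord_extE 0 rhs) -Hy //.
  by rewrite linear_sum; under eq_bigr do rewrite linearZ; rewrite subrr.
rewrite [w]row_sum_delta !linear_sum /= big1 // => l _.
by rewrite !linearZ /= /mk_linear s0_gen scaler0.
Qed.

End FPInjectiveOfChain.

(** * Jensen's criterion *)

(* Jensen's condition: [Ae :&: Af] is generated by [a e] and [(1 - a) f]. *)
Definition jensen_mod (A : comNzRingType) (E : lmodType A) :=
  forall e f : E, exists a : A, (exists r, a *: e = r *: f) /\ (exists r, (1 - a) *: f = r *: e).

Definition jensen (R : comNzRingType) :=
  forall x y : R, exists a, (exists r, a * x = r * y) /\ (exists r, (1 - a) * y = r * x).

Section JensenCriterion.
Variables (A : comNzRingType) (E : lmodType A).

Definition cyclic_submod (x : E) : E -> Prop := fun z => exists r, z = r *: x.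

Lemma cyclic_submodP x : is_submodule (cyclic_submod x).
Proof.
split=> [|_ _ [r ->] [r' ->] | r _ [r' ->]]; first by exists 0; rewrite scale0r.
  by exists (r + r'); rewrite scalerDl.
by exists (r * r'); rewrite scalerA.
Qed.

Lemma distributive_submodulesP : distributive_submodules E <-> jensen_mod E.
Proof.
split=> [Hdistr x y | HJ I J K [I0 ID IZ] [J0 JD JZ] [K0 KD KZ] x].
  have Hx : set_meet (set_sum (cyclic_submod y) (cyclic_submod (x - y))) (cyclic_submod x) x.
    split; last by exists 1; rewrite scale1r.
    by exists y, (x - y); split; [exists 1 | exists 1 |]; rewrite ?scale1r // addrC subrK.
  have [u [v [[[r1 Eu] _] [[c Ev] [r3 Ev']] Exuv]]] :=
    (Hdistr _ _ _ (cyclic_submodP y) (cyclic_submodP (x - y)) (cyclic_submodP x) x).1 Hx.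
  exists (1 - c); split.
    exists (r1 - c); apply/eqP; rewrite -subr_eq0.
    have -> : (1 - c) *: x - (r1 - c) *: y = x - (u + v) by rewrite Eu Ev; lmod_ring.
    by rewrite -Exuv subrr.
  by exists (c - r3); rewrite [RHS]scalerBl -Ev' Ev; lmod_ring.
split=> [[[i [j [Ii Jj ->]]] Kx] | [u [v [[Iu Ku] [Jv Kv] ->]]]]; last first.
  by split; [exists u, v | apply: KD].
have [a [[r Er] [r' Er']]] := HJ i j.
exists ((1 - a) *: (i + j)), (a *: (i + j)); split.
- split; last exact: KZ.
  by rewrite scalerDr Er' -scalerDl; apply: IZ.
- split; last exact: KZ.
  by rewrite scalerDr Er -scalerDl; apply: JZ.
- by rewrite -scalerDl subrK scale1r.
Qed.

Lemma jensen_mod_loc_chain (P : A -> Prop) : is_prime_ideal P -> jensen_mod E ->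
  forall e f : E, exists s, ~ P s /\ ((exists r, s *: e = r *: f) \/ (exists r, s *: f = r *: e)).
Proof.
move=> HP HJ e f; have [c [Ec Ec']] := HJ e f.
have [Pc | nPc] := pselect (P c); last by exists c; split=> //; left.
by exists (1 - c); split; [exact (prime_compl_1B HP Pc) | right].
Qed.

End JensenCriterion.

Lemma arithmeticalP (R : comNzRingType) : arithmetical R <-> jensen R.
Proof. exact: (distributive_submodulesP R^o). Qed.

Lemma jensen_loc_chain (R : comNzRingType) (P : R -> Prop) : is_prime_ideal P -> jensen R ->
  forall a b : R, exists s, ~ P s /\ ((exists r, s * a = r * b) \/ (exists r, s * b = r * a)).
Proof. exact: (@jensen_mod_loc_chain _ R^o). Qed.

Section TrivExtJensen.
Variables (A : comNzRingType) (E : lmodType A).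
Local Notation R := (triv_ext E).
Hypothesis jR : jensen R.

Lemma jensen_te_base : jensen A.
Proof.
move=> a b; have [[c g] [[[r1 r2] /(congr1 fst) E1] [[s1 s2] /(congr1 fst) E2]]] := jR (a, 0) (b, 0).
by exists c; split; [exists r1 | exists s1].
Qed.

Lemma jensen_te_mod : jensen_mod E.
Proof.
move=> e f; have [[c g] [[[r1 r2] /(congr1 snd) E1] [[s1 s2] /(congr1 snd) E2]]] := jR (0, e) (0, f).
by exists c; split; [exists r1 | exists s1]; rewrite /= !scale0r !addr0 in E1 E2.
Qed.

Lemma jensen_te_ann (a : A) (e : E) : exists c, c * a = 0 /\ exists h, (1 - c) *: e = a *: h.
Proof.
have [[c g] [[[r1 r2] /(congr1 fst) E1] [[s1 s2] /(congr1 snd) E2]]] := jR (a, 0) (0, e).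
exists c; split; first by rewrite /= mulr0 in E1.
by exists s2; rewrite /= scale0r scaler0 addr0 add0r in E2.
Qed.

End TrivExtJensen.

(** * Maximal ideals *)

Section MaximalIdeals.
Variable A : comNzRingType.

Lemma maximal_prime (P : A -> Prop) : is_maximal_ideal P -> is_prime_ideal P.
Proof.
move=> [[P0 PD PM] P1 Pmax]; split=> // a b Pab.
have [Pa | nPa] := pselect (P a); [by left | right].
pose J z := exists p r, P p /\ z = p + r * a.
have HJ : is_ideal J.
  split=> [|_ _ [p [r [Pp ->]]] [p' [r' [Pp' ->]]] | r0 _ [p [r [Pp ->]]]].
  - by exists 0, 0; rewrite mul0r addr0.
  - by exists (p + p'), (r + r'); rewrite mulrDl addrACA; split=> //; apply: PD.
  - by exists (r0 * p), (r0 * r); rewrite mulrDr mulrA; split=> //; apply: PM.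
have PJ x : P x -> J x by move=> Px; exists x, 0; rewrite mul0r addr0.
have [JP | [p [r [Pp E1]]]] := Pmax J HJ PJ.
  by exfalso; apply/nPa/JP; exists 0, 1; rewrite mul1r add0r.
rewrite -[b]mul1r E1 mulrDl -mulrA; apply: PD; first by rewrite mulrC; apply: PM.
by apply: PM.
Qed.

(* Only the nonempty members of the chain are required to be ideals. *)
Lemma bigcup_chain_ideal (F : (A -> Prop) -> Prop) :
  (forall J x, F J -> J x -> is_ideal J) -> classical_sets.total_on F classical_sets.subset ->
  forall J0 x0, F J0 -> J0 x0 -> is_ideal (classical_sets.bigcup F id).
Proof.
move=> FI Ftot J0 x0 FJ0 J0x0.
split=> [|a b [Ja FJa /= Ja_a] [Jb FJb /= Jb_b] | r a [Ja FJa /= Ja_a]].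
- by exists J0 => //; case: (FI _ _ FJ0 J0x0).
- have [sab | sba] := Ftot _ _ FJa FJb.
    by exists Jb => //; case: (FI _ _ FJb Jb_b) => _ + _; apply=> //; apply: sab.
  by exists Ja => //; case: (FI _ _ FJa Ja_a) => _ + _; apply=> //; apply: sba.
- by exists Ja => //; case: (FI _ _ FJa Ja_a) => _ _; apply.
Qed.

(* Krull's theorem.  Zorn's lemma is applied to the proper ideals containing
   [I] together with the empty set, which bounds the empty chain. *)
Lemma maximal_ideal_above (I : A -> Prop) : is_ideal I -> ~ I 1 ->
  exists P, is_maximal_ideal P /\ forall x, I x -> P x.
Proof.
move=> HI I1.
pose Q J := ~ J 1 /\ ((exists z, J z) -> is_ideal J /\ forall x, I x -> J x).
have [M [[M1 HM] Mmax]] : exists M, Q M /\ forall J, classical_sets.proper M J -> ~ Q J.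
  apply: classical_sets.Zorn_bigcup => F FQ Ftot; split; first by case=> J /FQ [].
  move=> [z [J FJ Jz]]; have [IJ IsubJ] := (FQ J FJ).2 (ex_intro _ z Jz).
  split; last by move=> x Ix; exists J => //; apply: IsubJ.
  apply: (bigcup_chain_ideal _ Ftot FJ Jz) => J' x FJ' J'x.
  by have [] := (FQ J' FJ').2 (ex_intro _ x J'x).
have [IM IsubM] : is_ideal M /\ forall x, I x -> M x.
  apply: HM; apply: contrapT => noM; apply: (Mmax I).
    split=> [z Mz | /(_ 0)]; first by exfalso; apply: noM; exists z.
    by case: HI => I0 _ _ /(_ I0) M0; apply: noM; exists 0.
  by split=> // _; split.
exists M; split=> //; split=> // J HJ MJ.
have [J1 | nJ1] := pselect (J 1); [by right | left].
apply: contrapT => JM; apply: (Mmax J); first by split=> // Hsub; apply: JM => x /Hsub.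
by split=> // _; split=> // x /IsubM /MJ.
Qed.

End MaximalIdeals.

Lemma mulr_rinv_eq0 (B : comNzRingType) (w z x : B) : w * z = 1 -> x * w = 0 -> x = 0.
Proof. by move=> wz1 xw0; rewrite -[x]mulr1 -wz1 mulrA xw0 mul0r. Qed.


(* An element of [E] that no [s] outside [P] kills; it exists iff [E_P <> 0]. *)
Definition loc_faithful (A : comNzRingType) (E : lmodType A) (P : A -> Prop) (e0 : E) :=
  forall s, ~ P s -> s *: e0 != 0.

Lemma loc_faithful_or_torsion (A : comNzRingType) (E : lmodType A) (P : A -> Prop) :
  (exists e0 : E, loc_faithful P e0) \/ (forall e : E, exists s, ~ P s /\ s *: e = 0).
Proof.
have [|no_e0] := pselect (exists e0 : E, loc_faithful P e0); [by left | right] => e.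
apply: contrapT => He; apply: no_e0; exists e => s Ps; apply/eqP => se0.
by apply: He; exists s.
Qed.

Lemma in_supp_faithful (A : comNzRingType) (E : lmodType A) (P : A -> Prop) :
  in_supp E P -> exists e0 : E, loc_faithful P e0.
Proof.
move=> [HP Hsupp]; have [//|tors] := loc_faithful_or_torsion E P.
pose psi0 (_ : E) : 'rV[locr (prime_compl HP)]_0 := 0.
have Hmod : is_module_localization P (loc_map (prime_compl HP)) psi0.
  split=> [x y | a e | m | e _]; rewrite /psi0 ?addr0 ?scaler0 //.
  by exists 0, 1; split; [exact: prime_compl1 | rewrite [m]thinmx0 scaler0].
have [m] := Hsupp _ _ (localization_exists HP) _ _ Hmod.
by rewrite [m]thinmx0 eqxx.
Qed.

Lemma loc_faithful_in_supp (A : comNzRingType) (E : lmodType A) (P : A -> Prop) (e0 : E) :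
  is_prime_ideal P -> loc_faithful P e0 -> in_supp E P.
Proof.
move=> HP He0; split=> // B phi _ M psi [_ _ _ psi0]; exists (psi e0).
by apply/eqP => /psi0 [s [Ps se0]]; move: (He0 s Ps); rewrite se0 eqxx.
Qed.

Section Localization.
Variables (A : comNzRingType) (P : A -> Prop) (HP : is_prime_ideal P).
Variables (B : comNzRingType) (phi : {rmorphism A -> B}).
Hypothesis Hloc : is_localization_at P phi.

Let phi_unit s : ~ P s -> exists u, phi s * u = 1. Proof. by case: Hloc => + _ _; apply. Qed.
Let phi_frac b : exists a s, ~ P s /\ b * phi s = phi a. Proof. by case: Hloc => _ + _; apply. Qed.
Let phi_eq0 a : phi a = 0 -> exists s, ~ P s /\ s * a = 0. Proof. by case: Hloc => _ _; apply. Qed.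

Lemma loc_chain_ring : jensen A -> chain_ring B.
Proof.
move=> jA b1 b2.
have [a1 [s1 [Ps1 E1]]] := phi_frac b1; have [a2 [s2 [Ps2 E2]]] := phi_frac b2.
have [t [Pt [[r Er] | [r Er]]]] := jensen_loc_chain HP jA a1 a2.
  have [z Ez] := phi_unit (prime_complM HP Ps1 Pt).
  exists (phi r * phi s2 * z); left.
  have H1 : b1 * phi (s1 * t) = phi r * phi s2 * b2.
    by rewrite rmorphM mulrA E1 -rmorphM [a1 * t]mulrC [t * a1]Er rmorphM -E2; ring.
  by rewrite -[b1]mulr1 -Ez mulrA H1; ring.
have [z Ez] := phi_unit (prime_complM HP Ps2 Pt).
exists (phi r * phi s1 * z); right.
have H1 : b2 * phi (s2 * t) = phi r * phi s1 * b1.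
  by rewrite rmorphM mulrA E2 -rmorphM [a2 * t]mulrC [t * a2]Er rmorphM -E1; ring.
by rewrite -[b2]mulr1 -Ez mulrA H1; ring.
Qed.

Lemma loc_domain :
  (forall a b : A, a * b = 0 -> (exists u, ~ P u /\ u * a = 0) \/ (exists u, ~ P u /\ u * b = 0)) ->
  is_domain B.
Proof.
move=> Hann x y xy0.
have [a [s [Ps Ex]]] := phi_frac x; have [b [t [Pt Ey]]] := phi_frac y.
have /phi_eq0 [u [Pu Eu]] : phi (a * b) = 0 by rewrite rmorphM -Ex -Ey mulrACA xy0 mul0r.
have [zs Ezs] := phi_unit Ps; have [zt Ezt] := phi_unit Pt; have [zu Ezu] := phi_unit Pu.
have [[v [Pv Ev]] | [v [Pv Ev]]] := Hann (u * a) b (etrans (esym (mulrA _ _ _)) Eu).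
  left; apply: (mulr_rinv_eq0 Ezs); rewrite Ex.
  have [zv Ezv] := phi_unit Pv.
  apply: (@mulr_rinv_eq0 _ (phi (v * u)) (zv * zu)); first by rewrite rmorphM mulrACA Ezv Ezu mulr1.
  by rewrite -rmorphM mulrCA [a * u]mulrC Ev rmorph0.
right; apply: (mulr_rinv_eq0 Ezt); rewrite Ey.
have [zv Ezv] := phi_unit Pv.
by apply: (mulr_rinv_eq0 Ezv); rewrite -rmorphM mulrC Ev rmorph0.
Qed.

Variables (E : lmodType A) (M : lmodType B) (psi : E -> M).
Hypothesis Hmod : is_module_localization P phi psi.

Lemma loc_divisible :
  (forall (a : A) (e : E), exists c, c * a = 0 /\ exists h, (1 - c) *: e = a *: h) -> divisible M.
Proof.
move=> Hann d nz_d m; case: Hmod => _ psiZ psi_frac _.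
have [a [s [Ps Ed]]] := phi_frac d; have [e [t [Pt Em]]] := psi_frac m.
have [c [Ec [h Eh]]] := Hann a e.
have [zs Ezs] := phi_unit Ps.
have Pc : P c.
  apply: contrapT => Pc; move/negP: nz_d; apply; apply/eqP.
  have [zc Ezc] := phi_unit Pc.
  apply: (mulr_rinv_eq0 Ezs); rewrite Ed; apply: (mulr_rinv_eq0 Ezc).
  by rewrite mulrC -rmorphM Ec rmorph0.
have [zt Ezt] := phi_unit Pt; have [zc Ezc] := phi_unit (prime_compl_1B HP Pc).
exists ((zt * zc * phi s) *: psi h).
have Epe : psi e = (zc * (d * phi s)) *: psi h.
  have E1 : phi (1 - c) *: psi e = (d * phi s) *: psi h by rewrite -psiZ Eh psiZ -Ed.
  by rewrite -scalerA -E1 scalerA mulrC Ezc scale1r.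
have Em' : m = zt *: psi e by rewrite -Em scalerA mulrC Ezt scale1r.
by rewrite Em' Epe !scalerA; congr (_ *: _); ring.
Qed.

End Localization.

(** * From [A ⋉ E] to [A] and [E] *)

Section Forward.
Variables (A : comNzRingType) (E : lmodType A).
Hypothesis jR : jensen (triv_ext E).

Lemma jensen_te_loc_ann (P : A -> Prop) (e0 : E) : is_prime_ideal P -> loc_faithful P e0 ->
  forall a b : A, a * b = 0 -> (exists u, ~ P u /\ u * a = 0) \/ (exists u, ~ P u /\ u * b = 0).
Proof.
move=> HP He0 a b ab0.
have [|Na] := pselect (exists u, ~ P u /\ u * a = 0); first by left.
have [|Nb] := pselect (exists u, ~ P u /\ u * b = 0); first by right.
exfalso; have [c [ca0 [h Eh]]] := jensen_te_ann jR a e0.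
have [Pc | nPc] := pselect (P c); last by apply: Na; exists c.
have [c' [cb0 [h' Eh']]] := jensen_te_ann jR b h.
have [Pc' | nPc'] := pselect (P c'); last by apply: Nb; exists c'.
(* [(1 - c') (1 - c) e0 = (1 - c') a h = a b h' = 0] *)
have := He0 _ (prime_complM HP (prime_compl_1B HP Pc') (prime_compl_1B HP Pc)).
rewrite -scalerA Eh scalerA mulrC -scalerA Eh' scalerA ab0.
by rewrite scale0r eqxx.
Qed.

Lemma jensen_te_supp_domain P : in_supp E P -> localization_is_domain P.
Proof.
move=> Hsupp B phi Hloc; have [e0 He0] := in_supp_faithful Hsupp.
exact: loc_domain Hloc (jensen_te_loc_ann (proj1 Hsupp) He0).
Qed.

Lemma jensen_te_locally_fp : locally_FP_injective E.
Proof.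
move=> P /maximal_prime HP B phi Hloc M psi Hmod.
exact: fp_injective_of_chain (loc_chain_ring HP Hloc (jensen_te_base jR))
  (loc_divisible HP Hloc Hmod (jensen_te_ann jR)).
Qed.

End Forward.

(** * From [A] and [E] to [A ⋉ E] *)

(* In the domain [A_P], a regular [a] becomes nonzero, and FP-injectivity of
   [E_P] makes it divide every element. *)
Lemma loc_regular_div (A : comNzRingType) (E : lmodType A) (P : A -> Prop) :
  is_maximal_ideal P -> localization_is_domain P -> locally_FP_injective E ->
  forall a, (forall u, ~ P u -> u * a != 0) -> forall e : E, exists s h, ~ P s /\ s *: e = a *: h.
Proof.
move=> HPm Hdom Hfp a Na e; have HP := maximal_prime HPm.
pose S := prime_compl HP.
have a_reg b : loc_map S a * b = 0 -> b = 0.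
  move=> /(Hdom _ _ (localization_exists HP)) [/loc_map_eq0 [u [Pu ua0]] | //].
  by move: (Na u Pu); rewrite ua0 eqxx.
have [y Hy] := fp_injective_div (locm_map S e) a_reg
  (Hfp P HPm _ _ (localization_exists HP) _ _ (module_localization_exists HP E)).
have [e' [s [Ss Hs]]] := locm_map_frac y.
have /locm_map_eq0 [u [Su Eu]] : locm_map S (a *: e' - s *: e) = 0.
  by rewrite locm_mapD -scaleNr !locm_mapZ -Hs -Hy rmorphN scaleNr !scalerA mulrC subrr.
exists (u * s), (u *: e'); split; first exact (prime_complM HP Su Ss).
have -> : (u * s) *: e = a *: (u *: e') - u *: (a *: e' - s *: e) by lmod_ring.
by rewrite Eu subr0.
Qed.

Section Backward.
Variables (A : comNzRingType) (E : lmodType A).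
Local Notation R := (triv_ext E).
Local Notation te_scal := (te_scal E).

(* [x] and [y] are comparable under divisibility in the localization at [P]. *)
Definition te_loc_chain (P : A -> Prop) (x y : R) := exists2 s, ~ P s &
  (exists rho, te_scal s * x = rho * y) \/ (exists rho, te_scal s * y = rho * x).

Lemma te_loc_chainC P x y : te_loc_chain P x y -> te_loc_chain P y x.
Proof. by case=> s Ps [H | H]; exists s => //; [right | left]. Qed.

(* The first components of the sums [a1 + a2] of coefficients satisfying
   Jensen's condition form an ideal of [A] lying in no maximal ideal, hence
   containing [1]; and [(1, g)] is a unit of [A ⋉ E]. *)
Lemma jensen_te_of_loc_chain :
  (forall P, is_maximal_ideal P -> forall x y, te_loc_chain P x y) -> jensen R.
Proof.
move=> Hloc x y.
pose T t := exists a1 a2 : R, [/\ (exists rho, a1 * x = rho * y),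
   (exists rho, a2 * y = rho * x) & t = (a1 + a2).1].
have HT : is_ideal T.
  split=> [|_ _ [a1 [a2 [[r1 E1] [r2 E2] ->]]] [a1' [a2' [[r1' E1'] [r2' E2'] ->]]]
          | r0 _ [a1 [a2 [[r1 E1] [r2 E2] ->]]]].
  - by exists 0, 0; split; [exists 0; rewrite !mul0r | exists 0; rewrite !mul0r | rewrite addr0].
  - exists (a1 + a1'), (a2 + a2'); split; last by rewrite /= addrACA.
      by exists (r1 + r1'); rewrite !mulrDl E1 E1'.
    by exists (r2 + r2'); rewrite !mulrDl E2 E2'.
  - exists (te_scal r0 * a1), (te_scal r0 * a2); split; last by rewrite -mulrDr.
      by exists (te_scal r0 * r1); rewrite -!mulrA E1.
    by exists (te_scal r0 * r2); rewrite -!mulrA E2.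
have [[a1 [a2 [[r1 E1] [r2 E2] Es]]] | nT1] := pselect (T 1); last first.
  have [P [HPm TP]] := maximal_ideal_above HT nT1.
  have [s Ps [[rho Erho] | [rho Erho]]] := Hloc P HPm x y; exfalso; apply/Ps/TP.
    by exists (te_scal s), 0; split; [exists rho | exists 0; rewrite !mul0r | rewrite addr0].
  by exists 0, (te_scal s); split; [exists 0; rewrite !mul0r | exists rho | rewrite add0r].
pose u : R := (1, - (a1 + a2).2).
have a12u : (a1 + a2) * u = 1.
  rewrite [a1 + a2]surjective_pairing -Es; congr pair; rewrite /= ?mulr1 //.
  by rewrite !scale1r addNr.
exists (a1 * u); split; first by exists (r1 * u); rewrite mulrAC E1 mulrAC.
have -> : 1 - a1 * u = a2 * u by rewrite -a12u mulrDl addrC addKr.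
by exists (r2 * u); rewrite mulrAC E2 mulrAC.
Qed.

Hypotheses (jA : jensen A) (jE : jensen_mod E).
Variables (P : A -> Prop) (HP : is_prime_ideal P).

Lemma te_loc_chain_torsion :
  (forall e : E, exists s, ~ P s /\ s *: e = 0) -> forall x y, te_loc_chain P x y.
Proof.
move=> tors [a e] [b f].
have [s1 [P1 E1]] := tors e; have [s2 [P2 E2]] := tors f.
have [t [Pt [[r Er] | [r Er]]]] := jensen_loc_chain HP jA a b;
  have Ps := prime_complM HP (prime_complM HP Pt P1) P2; exists (t * s1 * s2) => //.
  left; exists (te_scal (r * s1 * s2)); congr pair; rewrite /= ?scaler0 ?addr0.
    have -> : t * s1 * s2 * a = s1 * s2 * (t * a) by ring.
    by rewrite Er; ring.
  by rewrite mulrAC -!scalerA E1 E2 !scaler0.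
right; exists (te_scal (r * s1 * s2)); congr pair; rewrite /= ?scaler0 ?addr0.
  have -> : t * s1 * s2 * b = s1 * s2 * (t * b) by ring.
  by rewrite Er; ring.
by rewrite [r * s1 * s2]mulrAC -!scalerA E1 E2 !scaler0.
Qed.

Lemma te_loc_chain_ann a b (e f : E) : (exists u, ~ P u /\ u * a = 0) ->
  (exists u, ~ P u /\ u * b = 0) -> te_loc_chain P (a, e) (b, f).
Proof.
move=> [u [Pu Eu]] [v [Pv Ev]].
have [w [Pw [[k Ek] | [k Ek]]]] := jensen_mod_loc_chain HP jE e f;
  have Ps := prime_complM HP (prime_complM HP Pw Pu) Pv; exists (w * u * v) => //.
  left; exists (te_scal (u * v * k)); congr pair; rewrite /= ?scaler0 ?addr0.
    have -> : w * u * v * a = w * v * (u * a) by ring.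
    have -> : u * v * k * b = u * k * (v * b) by ring.
    by rewrite Eu Ev !mulr0.
  have -> : w * u * v = u * v * w by ring.
  by rewrite -scalerA Ek scalerA.
right; exists (te_scal (u * v * k)); congr pair; rewrite /= ?scaler0 ?addr0.
  have -> : w * u * v * b = w * u * (v * b) by ring.
  have -> : u * v * k * a = v * k * (u * a) by ring.
  by rewrite Eu Ev !mulr0.
have -> : w * u * v = u * v * w by ring.
by rewrite -scalerA Ek scalerA.
Qed.

Hypothesis Hdiv : forall a, (forall u, ~ P u -> u * a != 0) ->
  forall e : E, exists s h, ~ P s /\ s *: e = a *: h.

Lemma te_loc_chain_dvd a b (e f : E) : (forall u, ~ P u -> u * a != 0) ->
  (exists t r, ~ P t /\ t * b = r * a) ->
  exists2 s, ~ P s & exists rho : R, te_scal s * (b, f) = rho * (a, e).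
Proof.
move=> Na [t [r [Pt Et]]]; have [s [h [Ps Eh]]] := Hdiv Na (t *: f - r *: e).
have Pst := prime_complM HP Ps Pt; exists (s * t) => //.
exists (s * r, h); congr pair; first by rewrite /= -mulrA Et mulrA.
by rewrite /= !scaler0 !addr0 -Eh; lmod_ring.
Qed.

Lemma te_loc_chain_div x y : te_loc_chain P x y.
Proof.
have killed_or_reg c : (exists u, ~ P u /\ u * c = 0) \/ (forall u, ~ P u -> u * c != 0).
  have [|Nc] := pselect (exists u, ~ P u /\ u * c = 0); [by left | right].
  by move=> u Pu; apply/eqP => uc0; apply: Nc; exists u.
wlog Na : x y / forall u, ~ P u -> u * x.1 != 0.
  move=> Hwlog; case: x y => [a e] [b f].
  case: (killed_or_reg a) => [Ka | Na]; last exact: Hwlog.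
  case: (killed_or_reg b) => [Kb | Nb]; first exact: te_loc_chain_ann.
  exact/te_loc_chainC/Hwlog.
case: x y Na => [a e] [b f] /= Na.
have [t [Pt [[r Er] | [r Er]]]] := jensen_loc_chain HP jA a b.
  case: (killed_or_reg b) => [[v [Pv Ev]] | Nb].
    by move: (Na _ (prime_complM HP Pv Pt)); rewrite -mulrA [t * a]Er mulrCA Ev mulr0 eqxx.
  have [s Ps Hs] := te_loc_chain_dvd f e Nb (ex_intro _ t (ex_intro _ r (conj Pt Er))).
  by exists s => //; left.
have [s Ps Hs] := te_loc_chain_dvd e f Na (ex_intro _ t (ex_intro _ r (conj Pt Er))).
by exists s => //; right.
Qed.

End Backward.

Theorem corollary1p4 (A : comNzRingType) (E : lmodType A) :
  (exists e : E, e != 0) ->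
  (arithmetical (triv_ext E) <->
   [/\ arithmetical A,
       (forall P : A -> Prop, in_supp E P -> localization_is_domain P),
       locally_FP_injective E &
       distributive_submodules E]).
Proof.
(* The theorem also holds for [E = 0]. *)
move=> _; split=> [/arithmeticalP jR | [/arithmeticalP jA Hdom Hfp /distributive_submodulesP jE]].
  split; [exact/arithmeticalP/jensen_te_base | exact: jensen_te_supp_domain |
          exact: jensen_te_locally_fp | exact/distributive_submodulesP/jensen_te_mod].
apply/arithmeticalP/jensen_te_of_loc_chain => P HPm; have HP := maximal_prime HPm.
have [[e0 He0] | tors] := loc_faithful_or_torsion E P; last exact: te_loc_chain_torsion.
apply: (te_loc_chain_div jA jE HP); apply: loc_regular_div HPm _ Hfp.
exact/Hdom/loc_faithful_in_supp/He0.
Qed.
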